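(* For every connected graph $G$, $\tau(G)\leq \left\lceil \tfrac{1}{2}(\operatorname{dll}(G)+1)\,\operatorname{p}(G)\right\rceil$.
   Context: For an integer $k\geq 0$, the $k$-daddy-longlegs $W^{(k)}$ is the tree with vertex set $\{r,u_1,\dots,u_k,v_1,\dots,v_k\}$ and edge set $\{ru_i,u_iv_i:i\in\{1,\dots,k\}\}$ (so $W^{(0)}$ is a single vertex). The daddy-longlegs number $\operatorname{dll}(G)$ is the maximum $k\geq 0$ such that $W^{(k)}$ is a minor of $G$. The path number $\operatorname{p}(G)$ is the maximum $n$ such that $G$ contains a path on $n$ vertices. The vertex cover number $\tau(G)$ is the minimum size of a set $A\subseteq V(G)$ such that $V(G)\setminus A$ is an independent set. *)

From mathcomp Require Import all_boot.
Set Implicit Arguments. Unset Strict Implicit. Unset Printing Implicit Defensive.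

Definition simple_graph (T : finType) (e : rel T) : Prop :=
  symmetric e /\ irreflexive e.

Definition connected_graph (T : finType) (e : rel T) : bool :=
  [forall x, forall y, connect e x y].

Definition induced (T : finType) (e : rel T) (A : {set T}) : rel T :=
  fun x y => [&& x \in A, y \in A & e x y].

Definition connected_set (T : finType) (e : rel T) (A : {set T}) : bool :=
  (A != set0) && [forall x in A, forall y in A, connect (induced e A) x y].

Definition minorb (U T : finType) (f : rel U) (e : rel T) : bool :=
  [exists phi : {ffun U -> {set T}},
    [&& [forall u, connected_set e (phi u)],
        [forall u, forall v, (u != v) ==> [disjoint phi u & phi v]] &
        [forall u, forall v, f u v ==>
           [exists x in phi u, exists y in phi v, e x y]]]].

(* The k-daddy-longlegs W^(k): vertices r = None, u_i = Some (inl i),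
   v_i = Some (inr i); edges r u_i and u_i v_i. *)
Definition dll_vertex (k : nat) : finType := option ('I_k + 'I_k)%type.

Definition dll_edge (k : nat) : rel (dll_vertex k) :=
  fun a b =>
    match a, b with
    | None, Some (inl _) => true
    | Some (inl _), None => true
    | Some (inl i), Some (inr j) => i == j
    | Some (inr j), Some (inl i) => i == j
    | _, _ => false
    end.

(* dll(G): maximum k with W^(k) a minor of G (W^(k) has 2k+1 vertices, so
   k <= #|T| whenever it is a minor). *)
Definition dll (T : finType) (e : rel T) : nat :=
  \max_(k < #|T|.+1 | minorb (@dll_edge k) e) k.

Definition gpath (T : finType) (e : rel T) (s : seq T) : bool :=
  uniq s && (if s is x :: s' then path e x s' else true).

Definition path_number (T : finType) (e : rel T) : nat :=
  \max_(n < #|T|.+1 | [exists s : n.-tuple T, gpath e s]) n.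

Definition vertex_cover (T : finType) (e : rel T) (A : {set T}) : bool :=
  [forall x, forall y, e x y ==> (x \in A) || (y \in A)].

Definition tau (T : finType) (e : rel T) : nat :=
  \big[minn/#|T|]_(A : {set T} | vertex_cover e A) #|A|.

Definition ceil_half (m : nat) : nat := m.+1 %/ 2.

(* Call a vertex set A with a vertex r "connected from r" if every
   vertex of A is reachable from r inside the subgraph induced by A.  For such
   (A, r) we show by induction on |A| that either every edge inside A contains
   r (A is a star at r), or A carries a spider: a vertex cover C of A with
   r in C, a body S containing r and connected from r, m pairwise disjoint legs
   (edges u_i v_i of A outside S with u_i adjacent to S), and a path r :: s in
   A with h = |s|, subject to the invariant  2|C| + 3m + p <= 2h + mp + 3,
   where p = p(G).  Unless A = {r}, A splits at r into the component B of a
   neighbour x of r in A - r and the rest A \ B, the only edges between them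
   ending at r; the outcomes for (A \ B, r) and (B, x) combine in four ways
   into one for (A, r), and the invariant survives because the two recorded
   paths joined through the edge rx form a path of G.  For A = V(G), the body
   and legs of a spider form a W^(m) minor, so m <= dll(G), and h < p(G); the
   invariant then gives 2 tau(G) <= 2|C| <= (dll(G) + 1) p(G) + 1.  A star has
   tau(G) <= 1. *)

From mathcomp Require Import all_boot.
From mathcomp Require Import zify.
Set Implicit Arguments. Unset Strict Implicit. Unset Printing Implicit Defensive.

Section GraphParameters.
Variables (T : finType) (e : rel T).

Lemma gpath_size s : gpath e s -> size s <= path_number e.
Proof.
move=> gp; have us : uniq s by case/andP: gp.
have lt : size s < #|T|.+1 by rewrite ltnS -(card_uniqP us) max_card.
apply: (@leq_bigmax_cond _ (fun n : 'I_#|T|.+1 => [exists t : n.-tuple T, gpath e t])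
   (fun n => nat_of_ord n) (Ordinal lt)).
by apply/existsP; exists (in_tuple s).
Qed.

Lemma tau_le C : vertex_cover e C -> tau e <= #|C|.
Proof.
move=> vc; rewrite /tau.
have : C \in index_enum {set T} by rewrite mem_index_enum.
elim: (index_enum _) => [|A s IH] //; rewrite inE big_cons.
case/orP=> [/eqP <-|Cs]; first by rewrite vc geq_minl.
by case: ifP => _; [rewrite geq_min IH ?orbT | exact: IH].
Qed.

Lemma dll_le k : minorb (@dll_edge k) e -> k <= #|T| -> k <= dll e.
Proof.
rewrite -ltnS => mi lt.
exact: (@leq_bigmax_cond _ (fun k : 'I_#|T|.+1 => minorb (@dll_edge k) e)
   (fun n => nat_of_ord n) (Ordinal lt)).
Qed.

End GraphParameters.

Section Paths.
Variables (T : finType) (e : rel T).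
Hypothesis e_sym : symmetric e.

Lemma gpath_rev s : gpath e s -> gpath e (rev s).
Proof.
case: s => [|x p] //; rewrite /gpath => /andP[u pp]; rewrite rev_uniq u /=.
rewrite (lastI x p) rev_rcons /= rev_path.
by rewrite (@eq_path _ _ e) // => a b; rewrite /= e_sym.
Qed.

Lemma gpath_cons y x s :
  e y x -> y \notin x :: s -> gpath e (x :: s) -> gpath e (y :: x :: s).
Proof.
by move=> eyx yn /andP[u pth]; rewrite /gpath cons_uniq yn u /= eyx.
Qed.

Lemma gpath_rcons_cat s1 y x2 t2 : gpath e (rcons s1 y) -> gpath e (x2 :: t2) ->
  e y x2 -> uniq (rcons s1 y ++ x2 :: t2) -> gpath e (rcons s1 y ++ x2 :: t2).
Proof.
rewrite /gpath => /andP[_ p1] /andP[_ p2] ex u; rewrite u /=.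
case: s1 p1 {u} => [|a s1] /= p1; first by rewrite ex.
by rewrite cat_path p1 last_rcons /= ex.
Qed.

End Paths.

Section InducedConnectivity.
Variables (T : finType) (e : rel T).
Hypothesis e_sym : symmetric e.

Definition connected_from (A : {set T}) (r : T) : Prop :=
  forall z, z \in A -> connect (induced e A) r z.

Definition component (D : {set T}) (w : T) : {set T} :=
  [set y in D | connect (induced e D) w y].

Lemma induced_sym D : symmetric (induced e D).
Proof. by move=> x y; rewrite /induced e_sym andbCA. Qed.

Lemma connect_induced_sub (D1 D2 : {set T}) x y : D1 \subset D2 ->
  connect (induced e D1) x y -> connect (induced e D2) x y.
Proof.
move=> sD; apply: connect_sub => u v /and3P[uD vD uv]; apply: connect1.
by rewrite /induced (subsetP sD u uD) (subsetP sD v vD) uv.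
Qed.

Lemma connect_component (D : {set T}) w z : connect (induced e D) w z ->
  connect (induced e (component D w)) w z.
Proof.
move=> /connectP[p pp ->]; apply/connectP; exists p => //.
suff : forall u, connect (induced e D) w u -> path (induced e D) u p ->
    path (induced e (component D w)) u p by apply; rewrite ?connect0.
elim: p {pp} => //= a p IH u cu /andP[eu pp].
have ca : connect (induced e D) w a by apply: connect_trans cu (connect1 eu).
apply/andP; split; last exact: IH.
by case/and3P: eu => uD aD ua; rewrite /induced !inE uD aD ua cu ca.
Qed.

Lemma component_connected (D : {set T}) w : connected_from (component D w) w.
Proof. by move=> z; rewrite inE => /andP[_]; apply: connect_component. Qed.

Lemma connected_from_set1 r : connected_from [set r] r.
Proof. by move=> z /set1P ->. Qed.

Lemma connected_from_union (S1 S2 : {set T}) r x :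
  e r x -> r \in S1 -> x \in S2 -> connected_from S1 r -> connected_from S2 x ->
  connected_from (S1 :|: S2) r.
Proof.
move=> erx rS xS c1 c2 z; rewrite inE => /orP[/c1|/c2 cz].
  exact: connect_induced_sub (subsetUl _ _).
have erx' : induced e (S1 :|: S2) r x by rewrite /induced !inE rS xS orbT erx.
exact: connect_trans (connect1 erx') (connect_induced_sub (subsetUr _ _) cz).
Qed.

Lemma escape (A : {set T}) r z : z \in A -> z != r -> connect (induced e A) r z ->
  exists2 w, induced e A r w & (w != r) && connect (induced e (A :\ r)) w z.
Proof.
move=> zA zr /connectP[p pp lz].
pose escaped := exists2 w, induced e A r w &
                  (w != r) && connect (induced e (A :\ r)) w z.
suff /(_ r pp (sym_eq lz)) [//|/andP[]] : forall u, path (induced e A) u p ->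
    last u p = z -> escaped \/ ((u != r) && connect (induced e (A :\ r)) u z).
  by rewrite eqxx.
elim: p {pp lz} => [|v p IH] u /=.
  by move=> _ ->; right; rewrite zr connect0.
move=> /andP[uv pv] lz; have [|/andP[vr cv]] := IH v pv lz; first by left.
have [ur|ur] := eqVneq u r; first by left; exists v; [rewrite -ur | rewrite vr cv].
right => /=; apply: connect_trans cv; apply: connect1.
by case/and3P: uv => uA vA uv; rewrite /induced !inE ur uA vr vA uv.
Qed.

Lemma split_at_root (A : {set T}) r :
  r \in A -> connected_from A r -> A != [set r] ->
  exists2 x, e r x & exists B : {set T}, [/\ x \in B, B \subset A :\ r,
    connected_from B x, connected_from (A :\: B) r &
    forall y z, y \in B -> z \in A :\: B -> e y z -> z = r].
Proof.
move=> rA cA Ar; set D := A :\ r.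
have [y] : exists y, y \in D.
  by apply/set0Pn; apply: contra_neq Ar => D0; rewrite -(setD1K rA) -/D D0 setU0.
rewrite !inE => /andP[yr yA].
have [x /and3P[_ xA erx] /andP[xr _]] := escape yA yr (cA y yA).
have inD z : z \in A -> z != r -> z \in D by move=> zA zr; rewrite !inE zr.
have csym : connect_sym (induced e D) by apply: sym_connect_sym; apply: induced_sym.
set B := component D x.
have inB z : z \in D -> connect (induced e D) x z -> z \in B.
  by move=> zD cz; rewrite inE zD.
exists x => //; exists B; split.
- exact: inB (inD _ xA xr) (connect0 _ _).
- by apply/subsetP => z; rewrite inE => /andP[].
- exact: component_connected.
- move=> z; rewrite inE => /andP[zB zA].
  have [->|zr] := eqVneq z r; first exact: connect0.
  have [w /and3P[_ wA erw] /andP[wr cwz]] := escape zA zr (cA z zA).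
  have wB : w \notin B.
    by apply: contra zB; rewrite inE => /andP[_ cxw]; apply: inB (inD _ zA zr) _;
      apply: connect_trans cxw cwz.
  have sub : component D w \subset A :\: B.
    apply/subsetP => u; rewrite !inE => /andP[/andP[ur uA] cwu]; rewrite uA andbT.
    apply: contra wB => /andP[_ cxu]; apply: inB (inD _ wA wr) _.
    by apply: connect_trans cxu _; rewrite csym.
  have erw' : induced e (A :\: B) r w.
    have rB : r \notin B by rewrite inE !inE eqxx.
    by rewrite /induced !in_setD rB wB rA wA erw.
  exact: connect_trans (connect1 erw') (connect_induced_sub sub (connect_component cwz)).
- move=> y' z; rewrite !inE => /andP[/andP[y'r y'A] cxy] /andP[zB zA] eyz.
  apply/eqP; apply: contraNT zB => zr; rewrite zr zA /=.
  by apply: connect_trans cxy (connect1 _); rewrite /induced !inE y'r y'A zr zA eyz.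
Qed.

End InducedConnectivity.

Definition verts (T : Type) (legs : seq (T * T)) : seq T :=
  flatten [seq [:: l.1; l.2] | l <- legs].

Lemma size_verts (T : Type) (legs : seq (T * T)) :
  size (verts legs) = (size legs).*2.
Proof. by elim: legs => //= l legs IH; rewrite IH doubleS. Qed.

Lemma nth_verts (T : Type) (x0 : T) (legs : seq (T * T)) i : i < size legs ->
  nth x0 (verts legs) i.*2 = (nth (x0, x0) legs i).1 /\
  nth x0 (verts legs) i.*2.+1 = (nth (x0, x0) legs i).2.
Proof. by elim: legs i => [|l legs IH] [|i] //= /IH. Qed.

Lemma verts_cat (T : Type) (l1 l2 : seq (T * T)) :
  verts (l1 ++ l2) = verts l1 ++ verts l2.
Proof. by rewrite /verts map_cat flatten_cat. Qed.

Lemma legs_le_card (T : finType) (legs : seq (T * T)) :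
  uniq (verts legs) -> size legs <= #|T|.
Proof.
move=> u; have := max_card (mem (verts legs)).
by rewrite (card_uniqP u) size_verts -addnn; apply: leq_trans; apply: leq_addr.
Qed.

Section Minor.
Variables (T : finType) (e : rel T).
Hypothesis e_sym : symmetric e.

Lemma connected_from_set (S : {set T}) r :
  r \in S -> connected_from e S r -> connected_set e S.
Proof.
move=> rS cS; apply/andP; split; first by apply/set0Pn; exists r.
have csym : connect_sym (induced e S) by apply: sym_connect_sym; apply: induced_sym.
apply/forall_inP => x xS; apply/forall_inP => y yS.
by apply: connect_trans (cS _ yS); rewrite csym; apply: cS.
Qed.

(* A connected body S together with m pairwise disjoint edges u_i v_i outside
   S, each u_i adjacent to S, is a model of the daddy-longlegs W^(m):
   contract S to the root and keep every u_i and v_i as a singleton. *)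
Lemma daddy_longlegs_minor (S : {set T}) r (legs : seq (T * T)) :
  r \in S -> connected_from e S r ->
  uniq (verts legs) -> (forall z, z \in verts legs -> z \notin S) ->
  (forall l, l \in legs -> e l.1 l.2) ->
  (forall l, l \in legs -> exists2 z, z \in S & e z l.1) ->
  minorb (@dll_edge (size legs)) e.
Proof.
move=> rS cS uv vS el aS; set m := size legs.
pose idx (u : 'I_m + 'I_m) : nat :=
  match u with inl i => (nat_of_ord i).*2 | inr i => (nat_of_ord i).*2.+1 end.
pose lv u := nth r (verts legs) (idx u).
have idx_lt u : idx u < size (verts legs).
  by rewrite size_verts; case: u => i /=; have := ltn_ord i; rewrite -!muln2; lia.
have lv_inj u v : (lv u == lv v) = (u == v).
  have idx_inj : injective idx.
    by case=> [i|i] [j|j] /= H; rewrite -!muln2 in H; try lia;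
      congr (_ _); apply: val_inj => /=; lia.
  by rewrite /lv nth_uniq ?idx_lt //; apply/eqP/eqP => [/idx_inj|->].
have lvS u : lv u \notin S by apply: vS; apply: mem_nth.
have legE (i : 'I_m) : [/\ nth (r, r) legs i \in legs,
    lv (inl i) = (nth (r, r) legs i).1 & lv (inr i) = (nth (r, r) legs i).2].
  by have [h1 h2] := nth_verts r (ltn_ord i); split => //; apply: mem_nth.
apply/existsP; exists [ffun u : dll_vertex m =>
   if u is Some w then [set lv w] else S].
apply/and3P; split.
- apply/forallP => -[w|]; rewrite ffunE; last exact: connected_from_set rS cS.
  apply/andP; split; first by apply/set0Pn; exists (lv w); rewrite inE.
  by apply/forall_inP => x /set1P ->; apply/forall_inP => y /set1P ->.
- apply/forallP => u; apply/forallP => v; apply/implyP => uvn.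
  case: u uvn => [a|]; case: v => [b|] //= uvn; rewrite !ffunE.
  + by rewrite disjoints1 inE lv_inj.
  + by rewrite disjoints1.
  + by rewrite disjoint_sym disjoints1.
- apply/forallP => u; apply/forallP => v; apply/implyP.
  case: u => [[i|i]|]; case: v => [[j|j]|] //= ij; rewrite !ffunE.
  + move/eqP: ij => <-; have [li -> ->] := legE i.
    by apply/existsP; exists (nth (r, r) legs i).1; rewrite inE eqxx /=;
      apply/existsP; exists (nth (r, r) legs i).2; rewrite inE eqxx el.
  + have [li -> _] := legE i; have [z zS ez] := aS _ li.
    apply/existsP; exists (nth (r, r) legs i).1; rewrite inE eqxx /=.
    by apply/existsP; exists z; rewrite zS e_sym.
  + move/eqP: ij => ->; have [li -> ->] := legE i.
    by apply/existsP; exists (nth (r, r) legs i).2; rewrite inE eqxx /=;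
      apply/existsP; exists (nth (r, r) legs i).1; rewrite inE eqxx e_sym el.
  + have [li -> _] := legE j; have [z zS ez] := aS _ li.
    apply/existsP; exists z; rewrite zS /=.
    by apply/existsP; exists (nth (r, r) legs j).1; rewrite inE eqxx.
Qed.

End Minor.

(* The spider invariant 2c + 3m + p <= 2h + mp + 3 is preserved when two
   configurations on the two ends of an edge are merged, keeping the longer
   path, provided the two paths joined through that edge form a path of G. *)
Lemma bound_join c c1 c2 a b h1 h2 p : c <= c1 + c2 ->
  2 * c1 + 3 * a + p <= 2 * h1 + a * p + 3 ->
  2 * c2 + 3 * b + p <= 2 * h2 + b * p + 3 -> h1 + h2 + 2 <= p ->
  2 * c + 3 * (a + b) + p <= 2 * maxn h1 h2.+1 + (a + b) * p + 3.
Proof. nia. Qed.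

(* The invariant for a single leg, with a cover of at most two vertices and a
   path of two vertices. *)
Lemma bound_single_leg c p : c <= 2 -> 2 * c + 3 * 1 + p <= 2 * 2 + 1 * p + 3.
Proof. lia. Qed.

(* The invariant survives adding one vertex to the cover and to the path. *)
Lemma bound_grow c c' m h p : c' <= c.+1 ->
  2 * c + 3 * m + p <= 2 * h + m * p + 3 -> 2 * c' + 3 * m + p <= 2 * h.+1 + m * p + 3.
Proof. lia. Qed.

Section Spiders.
Variables (T : finType) (e : rel T).
Hypothesis e_sym : symmetric e.
Hypothesis e_irr : irreflexive e.

Definition covers (A C : {set T}) : Prop :=
  forall y z, y \in A -> z \in A -> e y z -> (y \in C) || (z \in C).

Lemma covers_sub (A C1 C2 : {set T}) : C1 \subset C2 -> covers A C1 -> covers A C2.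
Proof.
move=> sC cov y z yA zA /(cov _ _ yA zA).
by case/orP => /(subsetP sC) ->; rewrite ?orbT.
Qed.

Lemma covers_isolated_root (D : {set T}) x (C : {set T}) :
  covers D [set x] -> ~~ [exists w in D, e x w] -> covers D C.
Proof.
move=> cov nx y z yD zD eyz; case/negP: nx; apply/exists_inP.
by case/orP: (cov _ _ yD zD eyz) => /set1P xE; [exists z | exists y];
  rewrite // -xE // e_sym.
Qed.

(* A spider of (A, r): a vertex cover C of A containing r, a body S connected
   from r, a list of pairwise disjoint legs (edges of A outside S, each
   attached to S by its first vertex) and a path r :: s in A, such that the
   cover is small compared to the number m of legs and to the length h of the
   path: 2|C| + 3m + p <= 2h + mp + 3.  The legs give W^(m) as a minor and h < p,
   which turns the invariant into the bound of the main theorem. *)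
Record spider (A : {set T}) (r : T) (C S : {set T}) (legs : seq (T * T))
    (s : seq T) : Prop := Spider {
  spider_root_cover : r \in C;
  spider_cover : covers A C;
  spider_body_sub : S \subset A;
  spider_root_body : r \in S;
  spider_body_conn : connected_from e S r;
  spider_legs_uniq : uniq (verts legs);
  spider_legs_sub : {subset verts legs <= A};
  spider_legs_out : forall z, z \in verts legs -> z \notin S;
  spider_legs_edge : forall l, l \in legs -> e l.1 l.2;
  spider_legs_att : forall l, l \in legs -> exists2 z, z \in S & e z l.1;
  spider_path : gpath e (r :: s);
  spider_path_sub : {subset s <= A};
  spider_bound : 2 * #|C| + 3 * size legs + path_number e <=
                 2 * size s + size legs * path_number e + 3
}.

Definition star_or_spider (A : {set T}) (r : T) : Prop :=
  covers A [set r] \/ exists C S legs s, spider A r C S legs s.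

Lemma spider_widen (A' A : {set T}) r C S legs s : A' \subset A -> covers A C ->
  spider A' r C S legs s -> spider A r C S legs s.
Proof.
move=> sA cov [rC _ sS rS cS u lA lS ledge latt p pA b].
split=> //; first exact: subset_trans sS sA.
  by move=> z /lA /(subsetP sA).
by move=> z /pA /(subsetP sA).
Qed.

Section Combine.
Variables (A B : {set T}) (r x : T).
Hypothesis rA : r \in A.
Hypothesis BAr : B \subset A :\ r.
Hypothesis xB : x \in B.
Hypothesis erx : e r x.
Hypothesis no_cross : forall y z, y \in B -> z \in A :\: B -> e y z -> z = r.

Local Notation A' := (A :\: B).

Let rB : r \notin B.
Proof. by apply/negP => /(subsetP BAr); rewrite !inE eqxx. Qed.

Let BA : {subset B <= A}.
Proof. by move=> z /(subsetP BAr); rewrite inE => /andP[]. Qed.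

Let A'A : {subset A' <= A}.
Proof. by move=> z; rewrite inE => /andP[]. Qed.

Let A'B z : z \in A' -> z \notin B.
Proof. by rewrite inE => /andP[]. Qed.

Lemma covers_split (C : {set T}) : r \in C -> covers A' C -> covers B C -> covers A C.
Proof.
move=> rC covA' covB y z yA zA eyz.
have inA' u : u \in A -> u \notin B -> u \in A' by move=> uA uB; rewrite inE uB.
case: (boolP (y \in B)) => yB; case: (boolP (z \in B)) => zB.
- exact: covB.
- by rewrite (no_cross yB (inA' _ zA zB) eyz) rC orbT.
- by rewrite e_sym in eyz; rewrite (no_cross zB (inA' _ yA yB) eyz) rC.
- exact: covA' (inA' _ yA yB) (inA' _ zA zB) eyz.
Qed.

Lemma root_path s2 : gpath e (x :: s2) -> {subset s2 <= B} ->
  gpath e (r :: x :: s2).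
Proof.
move=> p2 sB; apply: gpath_cons => //; rewrite inE negb_or; apply/andP; split.
  by rewrite eq_sym; apply: contraNneq rB => <-.
by apply: contra rB => /sB.
Qed.

(* A path from r into A' and a path from x into B combine into one path. *)
Lemma path_through_root s1 s2 : gpath e (r :: s1) -> {subset s1 <= A'} ->
  gpath e (x :: s2) -> {subset s2 <= B} -> size s1 + size s2 + 2 <= path_number e.
Proof.
move=> p1 sA' p2 sB.
suff /gpath_size : gpath e (rcons (rev s2) x ++ r :: s1).
  by rewrite size_cat size_rcons size_rev /=; lia.
apply: gpath_rcons_cat => //; first by rewrite -rev_cons gpath_rev.
  by rewrite e_sym.
rewrite cat_uniq -rev_cons rev_uniq; case/andP: p2 => -> _; case/andP: p1 => -> _.
rewrite andbT; apply/hasPn => z; rewrite !inE mem_rev negb_or => zA'.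
have zB : z \notin B by case/orP: zA' => [/eqP -> | /sA' /A'B].
by apply/andP; split; [apply: contraNneq zB => -> | apply: contra zB => /sB].
Qed.

Lemma longer_path s1 s2 : gpath e (r :: s1) -> {subset s1 <= A'} ->
  gpath e (x :: s2) -> {subset s2 <= B} ->
  exists s, [/\ gpath e (r :: s), {subset s <= A} & size s = maxn (size s1) (size s2).+1].
Proof.
move=> p1 sA' p2 sB; case: leqP => _; last by exists s1; split=> // z /sA' /A'A.
exists (x :: s2); split=> //; first exact: root_path.
by move=> z; rewrite inE => /orP[/eqP -> | /sB]; apply: BA.
Qed.

Lemma uniq_verts_cat l1 l2 : uniq (verts l1) -> uniq (verts l2) ->
  {subset verts l1 <= A'} -> {subset verts l2 <= B} -> uniq (verts (l1 ++ l2)).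
Proof.
move=> u1 u2 s1 s2; rewrite verts_cat cat_uniq u1 u2 andbT /=.
by apply/hasPn => z /s2 zB; apply: contraL zB => /s1 /A'B.
Qed.

(* Two stars: either B has an edge xw, giving the spider with body {r} and
   the single leg xw, or B has no edges and A is a star at r. *)
Lemma star_star : covers A' [set r] -> covers B [set x] -> star_or_spider A r.
Proof.
move=> starA' starB.
case: (boolP [exists w in B, e x w]) => [/exists_inP[w wB exw]|nx].
  right; exists [set r; x], [set r], [:: (x, w)], [:: x; w].
  have xw : x != w by apply: contraTneq exw => ->; rewrite e_irr.
  have leg_sub : {subset [:: x; w] <= B}.
    by move=> z; rewrite !inE => /orP[] /eqP ->.
  split.
  - by rewrite !inE eqxx.
  - apply: covers_split; first by rewrite !inE eqxx.
      by apply: covers_sub starA'; rewrite sub1set !inE eqxx.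
    by apply: covers_sub starB; rewrite sub1set !inE eqxx orbT.
  - by rewrite sub1set.
  - by rewrite inE.
  - by move=> z /set1P ->.
  - by rewrite /verts /= inE xw.
  - by move=> z /leg_sub /BA.
  - by move=> z /leg_sub zB; rewrite inE; apply: contraNneq rB => <-.
  - by move=> l; rewrite inE => /eqP ->.
  - by move=> l; rewrite inE => /eqP -> /=; exists r; rewrite ?inE.
  - apply: root_path => [|z zw]; last by apply: leg_sub; rewrite inE zw orbT.
    by rewrite /gpath /= inE xw exw.
  - by move=> z /leg_sub /BA.
  - by apply: bound_single_leg; rewrite cards2; case: (r != x).
left; apply: covers_split => //; first by rewrite inE.
exact: covers_isolated_root nx.
Qed.

(* A star at r in A' and a spider of B: the edge rx glues r to the body. *)
Lemma star_spider C S legs s : covers A' [set r] -> spider B x C S legs s ->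
  spider A r (r |: C) (r |: S) legs (x :: s).
Proof.
move=> starA' [xC covB sS xS cS u lB lS ledge latt p pB b].
have rS : r \notin S by apply: contra rB => /(subsetP sS).
split.
- exact: setU11.
- apply: covers_split; first exact: setU11.
    by apply: covers_sub starA'; rewrite sub1set setU11.
  by apply: covers_sub covB; apply: subsetUr.
- by rewrite subUset sub1set rA; apply/subsetP => z /(subsetP sS) /BA.
- exact: setU11.
- exact: connected_from_union erx (set11 r) xS (@connected_from_set1 _ e r) cS.
- exact: u.
- by move=> z /lB /BA.
- move=> z zl; rewrite !inE negb_or (lS _ zl) andbT.
  by apply: contraNneq rB => <-; apply: lB.
- exact: ledge.
- by move=> l /latt[z zS ez]; exists z; rewrite // inE zS orbT.
- exact: root_path.
- by move=> z; rewrite inE => /orP[/eqP -> | /pB]; apply: BA.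
- by apply: bound_grow b; rewrite cardsU1 -add1n leq_add2r leq_b1.
Qed.

(* A spider of A' and a star at x in B containing an edge xw: the edge xw
   becomes a new leg, attached to the body through the edge rx. *)
Lemma spider_new_leg C S legs s w : spider A' r C S legs s ->
  covers B [set x] -> w \in B -> e x w ->
  exists s', spider A r (x |: C) S (legs ++ [:: (x, w)]) s'.
Proof.
move=> [rC covA' sS rS cS u lA' lS ledge latt p pA' b] starB wB exw.
have xw : x != w by apply: contraTneq exw => ->; rewrite e_irr.
have leg_sub : {subset verts [:: (x, w)] <= B}.
  by move=> z; rewrite !inE => /orP[] /eqP ->.
have pw : gpath e [:: x; w] by rewrite /gpath /= inE xw exw.
have wsub : {subset [:: w] <= B} by move=> z; rewrite inE => /eqP ->.
have [s' [p' pA sz]] := longer_path p pA' pw wsub.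
exists s'; split.
- by rewrite !inE rC orbT.
- apply: covers_split; first by rewrite !inE rC orbT.
    by apply: covers_sub covA'; apply: subsetUr.
  by apply: covers_sub starB; apply: subsetUl.
- by apply: subset_trans sS _; apply/subsetP; apply: A'A.
- exact: rS.
- exact: cS.
- by apply: uniq_verts_cat => //; rewrite /verts /= inE xw.
- by move=> z; rewrite verts_cat mem_cat => /orP[/lA' /A'A | /leg_sub /BA].
- move=> z; rewrite verts_cat mem_cat => /orP[/lS // | /leg_sub zB].
  by apply: contraL zB => /(subsetP sS) /A'B.
- by move=> l; rewrite mem_cat inE => /orP[/ledge | /eqP ->].
- by move=> l; rewrite mem_cat inE => /orP[/latt | /eqP -> /=]; last exists r.
- exact: p'.
- exact: pA.
- rewrite sz size_cat; apply: (bound_join (c2 := 1) _ b).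
  + by rewrite cardsU1 addnC leq_add2l leq_b1.
  + by rewrite !muln1 mul1n addnAC.
  + exact: path_through_root p pA' pw wsub.
Qed.

(* Two spiders: the bodies are glued along the edge rx and the legs are
   collected; the path through r bounds the two recorded paths. *)
Lemma spider_spider C1 S1 l1 s1 C2 S2 l2 s2 :
  spider A' r C1 S1 l1 s1 -> spider B x C2 S2 l2 s2 ->
  exists s, spider A r (C1 :|: C2) (S1 :|: S2) (l1 ++ l2) s.
Proof.
move=> [rC1 cov1 sS1 rS1 cS1 u1 lA1 lS1 ledge1 latt1 p1 pA1 b1].
move=> [xC2 cov2 sS2 xS2 cS2 u2 lB2 lS2 ledge2 latt2 p2 pB2 b2].
have [s [p pA sz]] := longer_path p1 pA1 p2 pB2.
have S1B z : z \in S1 -> z \notin B by move=> /(subsetP sS1) /A'B.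
exists s; split.
- by rewrite inE rC1.
- apply: covers_split; first by rewrite inE rC1.
    by apply: covers_sub cov1; apply: subsetUl.
  by apply: covers_sub cov2; apply: subsetUr.
- rewrite subUset; apply/andP; split; apply/subsetP => z.
    by move=> /(subsetP sS1) /A'A.
  by move=> /(subsetP sS2) /BA.
- by rewrite inE rS1.
- exact: connected_from_union erx rS1 xS2 cS1 cS2.
- exact: uniq_verts_cat.
- by move=> z; rewrite verts_cat mem_cat => /orP[/lA1 /A'A | /lB2 /BA].
- move=> z; rewrite verts_cat mem_cat inE negb_or => /orP[zl | zl].
    rewrite lS1 //=; apply: contraL (lA1 _ zl) => /(subsetP sS2) zB.
    by rewrite inE zB.
  by rewrite lS2 // andbT; apply: contraL (lB2 _ zl) => /S1B.
- by move=> l; rewrite mem_cat => /orP[/ledge1 | /ledge2].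
- move=> l; rewrite mem_cat => /orP[/latt1 | /latt2] [z zS ez]; exists z => //;
    by rewrite inE zS ?orbT.
- exact: p.
- exact: pA.
- rewrite sz size_cat; apply: bound_join b1 b2 (path_through_root p1 pA1 p2 pB2).
  by rewrite cardsU leq_subLR leq_addl.
Qed.

Lemma star_or_spider_combine :
  star_or_spider A' r -> star_or_spider B x -> star_or_spider A r.
Proof.
case=> [starA' | [C1 [S1 [l1 [s1 sp1]]]]] [starB | [C2 [S2 [l2 [s2 sp2]]]]].
- exact: star_star.
- by right; do 4 eexists; apply: star_spider sp2.
- case: (boolP [exists w in B, e x w]) => [/exists_inP[w wB exw]|nx].
    by have [s sp] := spider_new_leg sp1 starB wB exw; right; do 4 eexists; apply: sp.
  have covA : covers A C1 := covers_split (spider_root_cover sp1)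
    (spider_cover sp1) (covers_isolated_root _ starB nx).
  by right; exists C1, S1, l1, s1; apply: spider_widen (subsetDl A B) covA sp1.
- by have [s sp] := spider_spider sp1 sp2; right; do 4 eexists; apply: sp.
Qed.

End Combine.

Lemma covers_setT C : covers [set: T] C -> vertex_cover e C.
Proof.
by move=> cov; apply/forallP => y; apply/forallP => z; apply/implyP; apply: cov.
Qed.

Lemma star_or_spider_rooted n (A : {set T}) r :
  #|A| <= n -> r \in A -> connected_from e A r -> star_or_spider A r.
Proof.
elim: n A r => [|n IH] A r szA rA cA.
  by move: szA; rewrite leqn0 => /eqP/cards0_eq A0; rewrite A0 inE in rA.
have [->|Ar] := eqVneq A [set r].
  by left=> y z /set1P -> /set1P ->; rewrite set11.
have [x erx [B [xB BAr cB cA' cross]]] := split_at_root e_sym rA cA Ar.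
have smaller (D : {set T}) : D \proper A -> #|D| <= n.
  by move=> /proper_card lt; rewrite -ltnS; apply: leq_trans lt szA.
have BA : B \subset A by apply: subset_trans BAr (subsetDl _ _).
have rB : r \notin B by apply/negP => /(subsetP BAr); rewrite !inE eqxx.
have xA : x \in A by apply: (subsetP BA).
have ltB : #|B| <= n by apply/smaller/properP; split=> //; exists r.
have ltA' : #|A :\: B| <= n.
  by apply/smaller/properP; split; [apply: subsetDl | exists x; rewrite ?inE ?xB].
have rA' : r \in A :\: B by rewrite inE rB.
exact: star_or_spider_combine rA BAr xB erx cross
  (IH _ _ ltA' rA' cA') (IH _ _ ltB xB cB).
Qed.

End Spiders.

Lemma ceil_half_bound c m k h p : m <= k -> h < p ->
  2 * c + 3 * m + p <= 2 * h + m * p + 3 -> c <= ceil_half (k.+1 * p).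
Proof.
move=> mk hp; have : m * p <= k * p by apply: leq_mul.
rewrite /ceil_half; nia.
Qed.

(* The bound is at least 1 when p >= 1; this settles the case of a star, whose
   root alone is a vertex cover. *)
Lemma ceil_half_pos k p : 0 < p -> 1 <= ceil_half (k.+1 * p).
Proof. by rewrite /ceil_half; nia. Qed.

Theorem mainTheorem17 (T : finType) (e : rel T) :
  simple_graph e -> connected_graph e ->
  tau e <= ceil_half ((dll e).+1 * path_number e).
Proof.
case=> e_sym e_irr conn.
have [r _ | T0] := pickP T; last first.
  have vc : vertex_cover e set0 by apply/forallP => x; have := T0 x.
  by apply: leq_trans (tau_le vc) _; rewrite cards0.
have cT : connected_from e [set: T] r.
  move=> z _; rewrite (@eq_connect _ _ e) => [|y u]; last by rewrite /induced !inE.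
  by move/forallP: conn => /(_ r) /forallP.
case: (star_or_spider_rooted e_sym e_irr (leqnn _) (in_setT r) cT)
  => [star | [C [S [legs [s sp]]]]].
  apply: leq_trans (tau_le (covers_setT star)) _; rewrite cards1.
  by apply: ceil_half_pos; apply: (@gpath_size _ _ [:: r]).
case: sp => _ cov _ rS cS u _ lS ledge latt p _ b.
apply: leq_trans (tau_le (covers_setT cov)) (ceil_half_bound _ (gpath_size p) b).
exact: dll_le (daddy_longlegs_minor e_sym rS cS u lS ledge latt) (legs_le_card u).
Qed.
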